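(* Let $(X,\mathcal{M},O)$ be an empirical scenario, let $e=\{e_C\}_{C\in\mathcal{M}}$ be an empirical model on it, and let $e^\dagger$ be any WPS representation of $e$, with underlying weak probability space $(Y,\Sigma,\mu)$. Then: (1) if $e$ is strongly contextual, then $e^\dagger$ maximally violates subadditivity, i.e. there is a finite $V\subseteq\Sigma$ with $\bigcup V\in\Sigma$ and $\mathfrak{a}(V)=1$; (2) if $e$ is logically contextual, then $e^\dagger$ violates subadditivity, i.e. there is a finite $V\subseteq\Sigma$ with $\bigcup V\in\Sigma$ and $\mathfrak{a}(V)>0$; (3) if $e$ is probabilistically contextual, then every monotonic extension $(Y,\Sigma',\mu')$ of $(Y,\Sigma,\mu)$ violates additivity, i.e. there is a finite collection $V\subseteq\Sigma'$ of pairwise disjoint sets with $\bigcup V\in\Sigma'$ and $\mu'(\bigcup V)\neq\sum_{A\in V}\mu'(A)$.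
   Context: An empirical scenario is a triple $(X,\mathcal{M},O)$ where $X$ is a finite set (measurements), $\mathcal{M}$ is a family of subsets of $X$ (maximal contexts) covering $X$, none contained in another, and $O$ is a finite nonempty set (outcomes). A context is a subset of some maximal context; $\mathcal{M}'$ denotes the set of all contexts. For $U\subseteq X$ let $\mathcal{E}(U):=O^U$ (functions $U\to O$, called sections over $U$); for $U\subseteq U'$ and $s\in\mathcal{E}(U')$, $s|_U$ is the restriction; elements of $\mathcal{E}(X)$ are global sections. For $C\in\mathcal{M}$, a probability distribution $e_C$ on the finite set $\mathcal{E}(C)$, and $U\subseteq C$, the marginal $e_C|_U$ is the distribution on $\mathcal{E}(U)$ given by $e_C|_U(s)=\sum_{r\in\mathcal{E}(C),\,r|_U=s}e_C(r)$. An empirical model is a family $e=\{e_C\}_{C\in\mathcal{M}}$ of probability distributions $e_C$ on $\mathcal{E}(C)$ with $e_C|_{C\cap C'}=e_{C'}|_{C\cap C'}$ for all $C,C'\in\mathcal{M}$. A global section $s$ is consistent with the support of $e$ if $e_C(s|_C)>0$ for all $C\in\mathcal{M}$. $e$ is strongly contextual if no global section is consistent with the support of $e$; logically contextual if there exist $C\in\mathcal{M}$ and $t\in\mathcal{E}(C)$ with $e_C(t)>0$ such that no global section $s$ with $s|_C=t$ is consistent with the support of $e$; probabilistically contextual if there is no probability distribution $e_X$ on $\mathcal{E}(X)$ with $e_X|_C=e_C$ for all $C\in\mathcal{M}$. An event representation of $e$ is a set $Y$ together with an injective map $\bar E:\bigcup_{U\subseteq X}\mathcal{E}(U)\to P(Y)$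 such that for every nonempty $U\subseteq X$ and $s\in\mathcal{E}(U)$, $\bar E(s)=\bigcap_{x\in U}\bar E(s|_{\{x\}})\neq\emptyset$. For a nonempty context $U$, let $\Sigma_U$ be the Boolean algebra of subsets of $Y$ generated by $\{\bar E(s):s\in\mathcal{E}(\{x\}),x\in U\}$, and let $\Sigma=\bigcup_{U\in\mathcal{M}'}\Sigma_U$ (a collection of subsets of $Y$, not necessarily an algebra). A WPS representation of $e$ is such an event representation together with a function $\mu:\Sigma\to\mathbb{R}$ satisfying: (WC) for every context $U$, $\mu|_{\Sigma_U}$ is a (finitely additive) probability measure on $(Y,\Sigma_U)$; (EC) for every $C\in\mathcal{M}$, $U\subseteq C$, and $s\in\mathcal{E}(U)$, $\mu(\bar E(s))=e_C|_U(s)$; (ME) for every context $U$ and distinct $s,s'\in\mathcal{E}(U)$, $\mu(\bar E(s)\cap\bar E(s'))=0$. The triple $(Y,\Sigma,\mu)$ is its weak probability space. For a finite $V\subseteq\Sigma$ with $\bigcup V\in\Sigma$, the defect of subadditivity is $\mathfrak{a}(V):=\mu(\bigcup V)-\sum_{A\in V}\mu(A)$. An extension of $(Y,\Sigma,\mu)$ is a triple $(Y,\Sigma',\mu')$ where $\Sigma'\subseteq P(Y)$ contains the algebra generated by $\Sigma$ and $\mu':\Sigma'\to\mathbb{R}$ satisfies $\mu'|_\Sigma=\mu$; it is monotonic if $\mu'$ takes values in $[0,1]$ and $A\subseteq B$ implies $\mu'(A)\le\mu'(B)$. *)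

From HB Require Import structures.
From mathcomp Require Import all_boot all_order all_algebra.
From mathcomp Require Import boolp classical_sets reals.
Set Implicit Arguments.
Unset Strict Implicit.
Unset Printing Implicit Defensive.
Import Order.TTheory GRing.Theory Num.Theory.
Local Open Scope classical_set_scope.
Local Open Scope ring_scope.

Definition empirical_scenario (X O : finType) (M : {set {set X}}) : Prop :=
  [/\ (forall x : X, exists2 C, C \in M & x \in C),
      (forall C C', C \in M -> C' \in M -> C \subset C' -> C = C')
    & (0 < #|O|)%N ].

Definition context (X : finType) (M : {set {set X}}) (U : {set X}) : Prop :=
  exists2 C, C \in M & U \subset C.

(** * Sections
   A section over U is encoded as a finite function s : X -> option O whose
   domain {x | s x <> None} is exactly U.  Thus the disjoint union of all
   E(U), U ⊆ X, is exactly the type {ffun X -> option O}. *)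
Notation section X O := {ffun X -> option O}.

Definition dom (X O : finType) (s : section X O) : {set X} :=
  [set x | s x != None].

Definition sec_over (X O : finType) (U : {set X}) (s : section X O) : bool :=
  dom s == U.

(** restriction s|_U (meaningful when U ⊆ dom s) *)
Definition restrict (X O : finType) (U : {set X}) (s : section X O)
  : section X O := [ffun x => if x \in U then s x else None].

Definition global_section (X O : finType) (s : section X O) : bool :=
  sec_over [set: X] s.

(** * Empirical models
   e C is the distribution e_C on E(C) (only its values on sections over C
   are relevant). *)
Definition marginal (R : numDomainType) (X O : finType)
  (eC : section X O -> R) (C U : {set X}) (t : section X O) : R :=
  \sum_(r : section X O | sec_over C r && (restrict U r == t)) eC r.

Definition is_distribution_on (R : numDomainType) (X O : finType)
  (C : {set X}) (p : section X O -> R) : Prop :=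
  (forall r, sec_over C r -> 0 <= p r) /\
  \sum_(r : section X O | sec_over C r) p r = 1.

Definition empirical_model (R : numDomainType) (X O : finType)
  (M : {set {set X}}) (e : {set X} -> section X O -> R) : Prop :=
  (forall C, C \in M -> is_distribution_on C (e C)) /\
  (forall C C', C \in M -> C' \in M ->
     forall t, sec_over (C :&: C') t ->
       marginal (e C) C (C :&: C') t = marginal (e C') C' (C :&: C') t).

Definition consistent_with_support (R : numDomainType) (X O : finType)
  (M : {set {set X}}) (e : {set X} -> section X O -> R) (s : section X O)
  : Prop :=
  forall C, C \in M -> 0 < e C (restrict C s).

Definition strongly_contextual (R : numDomainType) (X O : finType)
  (M : {set {set X}}) (e : {set X} -> section X O -> R) : Prop :=
  ~ exists s, global_section s /\ consistent_with_support M e s.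

Definition logically_contextual (R : numDomainType) (X O : finType)
  (M : {set {set X}}) (e : {set X} -> section X O -> R) : Prop :=
  exists C, exists t, [/\ C \in M, sec_over C t, 0 < e C t &
    ~ exists s, [/\ global_section s, restrict C s = t &
                    consistent_with_support M e s]].

Definition probabilistically_contextual (R : numDomainType) (X O : finType)
  (M : {set {set X}}) (e : {set X} -> section X O -> R) : Prop :=
  ~ exists eX : section X O -> R,
      is_distribution_on [set: X] eX /\
      forall C, C \in M -> forall t, sec_over C t ->
        marginal eX [set: X] C t = e C t.

Inductive gen_algebra (Y : Type) (G : set (set Y)) : set (set Y) :=
  | ga_base A : G A -> gen_algebra G A
  | ga_empty : gen_algebra G set0
  | ga_compl A : gen_algebra G A -> gen_algebra G (~` A)
  | ga_union A B : gen_algebra G A -> gen_algebra G B ->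
                   gen_algebra G (A `|` B).

Definition event_representation (X O : finType) (Y : Type)
  (Ebar : section X O -> set Y) : Prop :=
  (forall s s', Ebar s = Ebar s' -> s = s') /\
  (forall (U : {set X}) (s : section X O), U != finset.set0 -> sec_over U s ->
     Ebar s = [set y | forall x, x \in U -> Ebar (restrict [set x] s) y]
     /\ Ebar s <> set0).

Definition SigmaU (X O : finType) (Y : Type) (Ebar : section X O -> set Y)
  (U : {set X}) : set (set Y) :=
  gen_algebra [set A | exists x, exists s,
                 [/\ x \in U, sec_over [set x] s & A = Ebar s]].

Definition Sigma (X O : finType) (M : {set {set X}}) (Y : Type)
  (Ebar : section X O -> set Y) : set (set Y) :=
  [set A | exists U, [/\ context M U, U != finset.set0 & SigmaU Ebar U A]].

Definition fa_probability (R : numDomainType) (Y : Type)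
  (F : set (set Y)) (mu : set Y -> R) : Prop :=
  [/\ (forall A, F A -> 0 <= mu A),
      mu setT = 1
    & (forall A B, F A -> F B -> A `&` B = set0 -> mu (A `|` B) = mu A + mu B)].

(** WPS representation (μ is given as a total function on subsets of Y;
    only its values on Σ are constrained). *)
Definition WPS_representation (R : numDomainType) (X O : finType)
  (M : {set {set X}}) (e : {set X} -> section X O -> R) (Y : Type)
  (Ebar : section X O -> set Y) (mu : set Y -> R) : Prop :=
  [/\ event_representation Ebar,
      (forall U, context M U -> U != finset.set0 -> fa_probability (SigmaU Ebar U) mu),
      (* (EC) *)
      (forall (C U : {set X}) s, C \in M -> U \subset C -> sec_over U s ->
         Sigma M Ebar (Ebar s) -> mu (Ebar s) = marginal (e C) C U s)
    & (* (ME) *)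
      (forall U s s', context M U -> sec_over U s -> sec_over U s' -> s != s' ->
         mu (Ebar s `&` Ebar s') = 0)].

(** A finite family V of subsets of Y, given as an injective enumeration
    V : 'I_n -> set Y. *)
Definition fin_family (Y : Type) (n : nat) (V : 'I_n -> set Y) : Prop :=
  forall i j, V i = V j -> i = j.

Definition family_union (Y : Type) (n : nat) (V : 'I_n -> set Y) : set Y :=
  [set y | exists i, V i y].

Definition defect (R : numDomainType) (Y : Type) (mu : set Y -> R)
  (n : nat) (V : 'I_n -> set Y) : R :=
  mu (family_union V) - \sum_(i < n) mu (V i).

Definition monotonic_extension (R : numDomainType) (Y : Type)
  (Sig : set (set Y)) (mu : set Y -> R)
  (Sig' : set (set Y)) (mu' : set Y -> R) : Prop :=
  [/\ (forall A, gen_algebra Sig A -> Sig' A),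
      (forall A, Sig A -> mu' A = mu A),
      (forall A, Sig' A -> 0 <= mu' A <= 1)
    & (forall A B, Sig' A -> Sig' B -> A `<=` B -> mu' A <= mu' B)].

From HB Require Import structures.
From mathcomp Require Import all_boot all_order all_algebra.
From mathcomp Require Import boolp classical_sets reals.
Import Order.TTheory GRing.Theory Num.Theory.
Local Open Scope classical_set_scope.
Local Open Scope ring_scope.

Set Implicit Arguments.
Unset Strict Implicit.
Unset Printing Implicit Defensive.

(* For each measurement x, the set [undetermined x] of points lying in no event
   E(s), s in E({x}), is mu-null: by (ME) and (EC) these events are almost
   disjoint with total mass 1.  A point y outside every [undetermined x] lies in
   E(g|_x) for all x, for some global section g.  If no such g is consistent with
   the support of e, then y lies in an event E(g|_C) with e_C(g|_C) = 0.  Hence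
   these null events cover Y, and their union has defect 1; in the logical case
   one adds the complement of E(t), of mass 1 - e_C(t), to get defect >= e_C(t).
   Finally, a monotonic extension that is additive on disjoint families is a
   finitely additive probability on the algebra generated by Sigma; as the events
   E(g), g global, partition Y up to null sets, g |-> mu'(E(g)) is a global
   distribution with marginals e_C. *)

Section BigSetOps.
Variables (Y : Type) (I : choiceType).

Lemma bigsetUP (r : seq I) (P : pred I) (f : I -> set Y) y :
  (\big[setU/set0]_(i <- r | P i) f i) y <-> exists2 i, (i \in r) && P i & f i y.
Proof. by rewrite -bigcup_seq_cond. Qed.

Lemma bigsetIP (r : seq I) (P : pred I) (f : I -> set Y) y :
  (\big[setI/setT]_(i <- r | P i) f i) y <-> forall i, (i \in r) && P i -> f i y.
Proof. by rewrite -bigcap_seq_cond. Qed.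

End BigSetOps.

Section GeneratedAlgebra.
Variables (Y : Type) (G : set (set Y)).
Local Notation F := (gen_algebra G).

Lemma gen_algebraT : F setT.
Proof. by rewrite -setC0; apply/ga_compl/ga_empty. Qed.

Lemma gen_algebraI A B : F A -> F B -> F (A `&` B).
Proof. by move=> FA FB; rewrite -[_ `&` _]setCK setCI; do 3!constructor. Qed.

Lemma gen_algebraD A B : F A -> F B -> F (A `\` B).
Proof. by move=> FA FB; apply: gen_algebraI => //; constructor. Qed.

Lemma gen_algebra_bigU (I : Type) (r : seq I) (P : pred I) (f : I -> set Y) :
  (forall i, P i -> F (f i)) -> F (\big[setU/set0]_(i <- r | P i) f i).
Proof. by apply: big_ind; [exact: ga_empty | exact: ga_union]. Qed.

Lemma gen_algebra_bigI (I : Type) (r : seq I) (P : pred I) (f : I -> set Y) :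
  (forall i, P i -> F (f i)) -> F (\big[setI/setT]_(i <- r | P i) f i).
Proof. by apply: big_ind; [exact: gen_algebraT | exact: gen_algebraI]. Qed.

End GeneratedAlgebra.

Section FinitelyAdditiveMeasure.
Variables (R : numDomainType) (Y : Type) (G : set (set Y)) (m : set Y -> R).
Local Notation F := (gen_algebra G).
Hypotheses (m_ge0 : forall A, F A -> 0 <= m A)
  (mU : forall A B, F A -> F B -> A `&` B = set0 -> m (A `|` B) = m A + m B).

Lemma measure0 : m set0 = 0.
Proof.
have := mU (ga_empty G) (ga_empty G) (setI0 _); rewrite setU0 => m00.
by apply: (addrI (m set0)); rewrite addr0 -m00.
Qed.

Lemma measureC A : F A -> m (~` A) = m setT - m A.
Proof.
move=> FA; rewrite -(setUCr A) mU ?setICr //; last exact: ga_compl.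
by rewrite addrC addKr.
Qed.

Lemma measure_splitI A B : F A -> F B -> m A = m (A `&` B) + m (A `\` B).
Proof.
move=> FA FB; rewrite -mU ?setUIDK //; first exact: gen_algebraI.
  exact: gen_algebraD.
by rewrite setDE setIACA setICr setI0.
Qed.

Lemma le_measure A B : F A -> F B -> A `<=` B -> m A <= m B.
Proof.
move=> FA FB AB; rewrite (measure_splitI FB FA) setIidr //.
by rewrite lerDl m_ge0 //; exact: gen_algebraD.
Qed.

Lemma measure_sub0 A B : F A -> F B -> A `<=` B -> m B = 0 -> m A = 0.
Proof.
by move=> FA FB AB mB0; apply/eqP; rewrite eq_le m_ge0 // -mB0 le_measure.
Qed.

Lemma measureUD A B : F A -> F B -> m (A `|` B) = m A + m (B `\` A).
Proof.
move=> FA FB; rewrite -mU //; last by rewrite setDE setICA setICr setI0.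
  by rewrite setDE setUIr setUCr setIT.
exact: gen_algebraD.
Qed.

Lemma measureU_null A B : F A -> F B -> m (A `&` B) = 0 ->
  m (A `|` B) = m A + m B.
Proof.
move=> FA FB mAB0.
by rewrite measureUD // [m B](measure_splitI FB FA) setIC mAB0 add0r.
Qed.

Lemma measureU_le A B : F A -> F B -> m (A `|` B) <= m A + m B.
Proof.
move=> FA FB; rewrite measureUD // lerD2l.
by apply: le_measure => //; exact: gen_algebraD.
Qed.

Lemma measure_bigU_le (I : Type) (r : seq I) (P : pred I) (f : I -> set Y) :
    (forall i, P i -> F (f i)) ->
  m (\big[setU/set0]_(i <- r | P i) f i) <= \sum_(i <- r | P i) m (f i).
Proof.
move=> Ff; pose K A x := F A /\ m A <= x.
suff : K (\big[setU/set0]_(i <- r | P i) f i) (\sum_(i <- r | P i) m (f i)) by case.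
apply: (big_ind2 K); first by rewrite /K measure0; split; [exact: ga_empty|].
  move=> A x B z [FA mA] [FB mB]; split; first exact: ga_union.
  by apply: le_trans (measureU_le FA FB) _; apply: lerD.
by move=> i Pi; split; [exact: Ff|].
Qed.

Lemma measure_bigU_null (I : eqType) (r : seq I) (P : pred I) (f : I -> set Y) :
    uniq r -> (forall i, P i -> F (f i)) ->
    (forall i j, P i -> P j -> i != j -> m (f i `&` f j) = 0) ->
  m (\big[setU/set0]_(i <- r | P i) f i) = \sum_(i <- r | P i) m (f i).
Proof.
move=> + Ff f_null; elim: r => [|i r IH] /=; first by rewrite !big_nil measure0.
case/andP=> i_r ur; rewrite !big_cons; case: ifP => Pi; last exact: IH.
have FUr : F (\big[setU/set0]_(j <- r | P j) f j) by exact: gen_algebra_bigU.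
rewrite measureU_null ?IH //; first exact: Ff.
rewrite (big_endo _ (setIUr _) (setI0 _)); apply/eqP; rewrite eq_le m_ge0 ?andbT.
  apply: le_trans (measure_bigU_le _ _) _.
    by move=> j Pj; apply: gen_algebraI; apply: Ff.
  rewrite big_seq_cond big1 // => j /andP[j_r Pj]; apply: f_null => //.
  by apply: contraNneq i_r => ->.
by apply: gen_algebra_bigU => j Pj; apply: gen_algebraI; apply: Ff.
Qed.

Lemma measure_partition (I : eqType) (r : seq I) (P : pred I) (f : I -> set Y) :
    uniq r -> (forall i, P i -> F (f i)) ->
    (forall i j, P i -> P j -> i != j -> m (f i `&` f j) = 0) ->
    m (~` \big[setU/set0]_(i <- r | P i) f i) = 0 ->
  forall B, F B -> m B = \sum_(i <- r | P i) m (B `&` f i).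
Proof.
move=> ur Ff f_null mCU0 B FB.
have FU : F (\big[setU/set0]_(i <- r | P i) f i) by exact: gen_algebra_bigU.
have mBU0 : m (B `\` \big[setU/set0]_(i <- r | P i) f i) = 0.
  by apply: (measure_sub0 _ (ga_compl FU)) mCU0; [exact: gen_algebraD | move=> y []].
rewrite (measure_splitI FB FU) mBU0 addr0.
rewrite (big_endo _ (setIUr _) (setI0 _)) measure_bigU_null //.
  by move=> i Pi; apply: gen_algebraI => //; apply: Ff.
move=> i j Pi Pj ij; apply: (measure_sub0 (B := f i `&` f j)); last exact: f_null.
- by apply: gen_algebraI; apply: gen_algebraI => //; apply: Ff.
- by apply: gen_algebraI; apply: Ff.
- by move=> y [[_ ?] [_ ?]].
Qed.

End FinitelyAdditiveMeasure.

Lemma ler_sum_undup (R : numDomainType) (T : eqType) (F : T -> R) (s : seq T) :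
  {in s, forall x, 0 <= F x} -> \sum_(x <- undup s) F x <= \sum_(x <- s) F x.
Proof.
elim: s => [|x s IH] F_ge0 /=; first by rewrite big_nil.
have F_ge0s : {in s, forall z, 0 <= F z} by move=> z zs; rewrite F_ge0 // inE zs orbT.
rewrite big_cons; case: ifP => _; last by rewrite big_cons lerD2l IH.
by rewrite -[X in X <= _]add0r lerD ?IH // F_ge0 // mem_head.
Qed.

Section FamilyOfSeq.
Variables (Y : Type) (L : seq (set Y)).

Definition family_of_seq (i : 'I_(size (undup L))) : set Y := nth set0 (undup L) i.

Lemma fin_family_of_seq : fin_family family_of_seq.
Proof.
by move=> i j /eqP; rewrite nth_uniq ?undup_uniq // => /eqP /val_inj.
Qed.

Lemma family_of_seq_mem i : family_of_seq i \in L.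
Proof. by rewrite -mem_undup mem_nth. Qed.

Lemma family_union_of_seq :
  family_union family_of_seq = [set y | exists2 A, A \in L & A y].
Proof.
apply/seteqP; split=> y /= [i].
  by exists (family_of_seq i) => //; apply: family_of_seq_mem.
rewrite -mem_undup -index_mem => iL iy; exists (Ordinal iL).
by rewrite /family_of_seq nth_index // -index_mem.
Qed.

Lemma sum_family_of_seq (R : numDomainType) (m : set Y -> R) :
  \sum_(i < size (undup L)) m (family_of_seq i) = \sum_(A <- undup L) m A.
Proof. by rewrite (big_nth set0) big_mkord. Qed.

End FamilyOfSeq.
Arguments family_of_seq {Y} L i.

Section AdditiveOnFamilies.
Variables (R : numDomainType) (Y : Type) (S : set (set Y)) (m : set Y -> R).
Hypothesis m_families : forall n (V : 'I_n -> set Y), fin_family V ->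
  (forall i, S (V i)) -> (forall i j, i != j -> V i `&` V j = set0) ->
  S (family_union V) -> m (family_union V) = \sum_(i < n) m (V i).

Lemma families_additive_set0 : S set0 -> m set0 = 0.
Proof.
move=> S0; have U0 : family_union (fun i : 'I_0 => set0) = set0 :> set Y.
  by apply/seteqP; split=> y // [[]].
by rewrite -{1}U0 m_families ?big_ord0 ?U0 //; case.
Qed.

Lemma families_additive_setU A B : S set0 -> S A -> S B -> S (A `|` B) ->
  A `&` B = set0 -> m (A `|` B) = m A + m B.
Proof.
move=> S0 SA SB SAB AB0; have [eqAB|neqAB] := eqVneq A B.
  move: AB0; rewrite -eqAB setIid => ->.
  by rewrite setU0 families_additive_set0 // addr0.
(* Families are injective, hence the case A = B (that is, A = B = set0) above. *)
pose V (i : 'I_2) := if i == ord0 then A else B.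
have UV : family_union V = A `|` B.
  apply/seteqP; split=> y /=; first by case=> i; rewrite /V; case: ifP; [left|right].
  by case=> ?; [exists ord0 | exists ord_max].
rewrite -{1}UV m_families ?UV //; first by rewrite big_ord_recr big_ord1.
- move=> [[|[|?]] ?] [[|[|?]] ?] //= VV; apply/val_inj => //=;
    by move: VV neqAB; rewrite /V /= => ->; rewrite eqxx.
- by move=> i; rewrite /V; case: ifP.
- by move=> [[|[|?]] ?] [[|[|?]] ?] //= _; rewrite /V /= // setIC.
Qed.

End AdditiveOnFamilies.

Section Sections.
Variables (X O : finType).
Implicit Types (s t g : section X O) (U C : {set X}).

Lemma mem_dom s x : (x \in dom s) = (s x != None).
Proof. by rewrite inE. Qed.

Lemma dom_restrict U s : dom (restrict U s) = U :&: dom s.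
Proof. by apply/setP=> x; rewrite !inE ffunE; case: (x \in U). Qed.

Lemma restrict_id C s : sec_over C s -> restrict C s = s.
Proof.
by move/eqP=> <-; apply/ffunP=> x; rewrite ffunE mem_dom; case: (s x).
Qed.

Lemma restrict_restrict U C s : U \subset C ->
  restrict U (restrict C s) = restrict U s.
Proof.
move/fintype.subsetP=> UC; apply/ffunP=> x; rewrite !ffunE.
by case xU: (x \in U); rewrite ?UC.
Qed.

Lemma sec_over_restrict U s : U \subset dom s -> sec_over U (restrict U s).
Proof. by move=> Us; rewrite /sec_over dom_restrict; apply/eqP/finset.setIidPl. Qed.

Lemma sub_dom_global U g : global_section g -> U \subset dom g.
Proof. by move=> /eqP ->; apply: finset.subsetT. Qed.

Lemma sec_over_restrict_global C g : global_section g -> sec_over C (restrict C g).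
Proof. by move=> gX; apply/sec_over_restrict/sub_dom_global. Qed.

Lemma sec_over0 s : sec_over finset.set0 s = (s == [ffun => None]).
Proof.
apply/eqP/eqP=> [s0|->]; last by apply/setP=> x; rewrite mem_dom ffunE inE.
by apply/ffunP=> x; move/setP/(_ x): s0; rewrite mem_dom ffunE inE; case: (s x).
Qed.

Lemma restrict0 s : restrict finset.set0 s = [ffun => None].
Proof. by apply/ffunP=> x; rewrite !ffunE inE. Qed.

Lemma restrict1_eq C g t : sec_over C t ->
  (forall x, x \in C -> restrict [set x] g = restrict [set x] t) -> restrict C g = t.
Proof.
move=> /eqP tC gt; apply/ffunP=> x; rewrite ffunE.
case: ifP => xC; first by move/ffunP/(_ x): (gt x xC); rewrite !ffunE set11.
by move/setP/(_ x): tC; rewrite mem_dom xC; case: (t x).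
Qed.

Lemma restrict1_neq s s' : s != s' ->
  exists x, restrict [set x] s != restrict [set x] s'.
Proof.
move=> neq_ss'; have [x sx] : exists x, s x != s' x.
  apply/existsP; apply: contraNT neq_ss' => /existsPn eq_ss'.
  by apply/eqP/ffunP=> x; apply/eqP/negbNE.
by exists x; apply: contra sx => /eqP/ffunP/(_ x); rewrite !ffunE set11 => ->.
Qed.

Lemma glue_sections (f : X -> section X O) :
  (forall x, sec_over [set x] (f x)) ->
  exists g, global_section g /\ forall x, restrict [set x] g = f x.
Proof.
move=> fx; exists [ffun z => f z z]; split.
  apply/eqP/setP=> z; rewrite mem_dom ffunE inE.
  by move/eqP/setP/(_ z): (fx z); rewrite mem_dom set11.
move=> x; apply/ffunP=> z; rewrite !ffunE inE; case: eqP => [-> //|/eqP zx].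
by move/eqP/setP/(_ z): (fx x); rewrite mem_dom inE (negbTE zx); case: (f x z).
Qed.

Lemma marginal_id (R : numDomainType) (eC : section X O -> R) C s :
  sec_over C s -> marginal eC C C s = eC s.
Proof.
move=> sC; rewrite /marginal (big_pred1 s) // => r /=.
by apply/andP/eqP=> [[rC /eqP <-]|->]; rewrite ?restrict_id ?eqxx.
Qed.

Lemma distribution_set0 (R : numDomainType) (p : section X O -> R) :
  is_distribution_on finset.set0 p -> p [ffun => None] = 1.
Proof.
by case=> _ <-; rewrite (big_pred1 [ffun => None]) // => r; rewrite sec_over0.
Qed.

Lemma set1_neq0 (x : X) : [set x]%SET != finset.set0.
Proof. by apply/set0Pn; exists x; rewrite inE. Qed.

Lemma sum_marginal (R : numDomainType) (eC : section X O -> R) C U :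
  U \subset C ->
  \sum_(s | sec_over U s) marginal eC C U s = \sum_(r | sec_over C r) eC r.
Proof.
move=> UC; rewrite [RHS](partition_big (restrict U) (sec_over U)) //.
by move=> r /eqP rC; apply: sec_over_restrict; rewrite rC.
Qed.

End Sections.

Section EventRepresentation.
Variables (X O : finType) (Y : Type) (Ebar : section X O -> set Y).
Hypothesis ER : event_representation Ebar.
Implicit Types (s : section X O) (U : {set X}).

Lemma EbarE s : dom s != finset.set0 ->
  Ebar s = [set y | forall x, x \in dom s -> Ebar (restrict [set x] s) y].
Proof. by move=> s0; case: ER => _ /(_ _ s s0 (eqxx _)) []. Qed.

Lemma Ebar_restrict_sub U s : U != finset.set0 -> U \subset dom s ->
  Ebar s `<=` Ebar (restrict U s).
Proof.
move=> U0 Us; have domU : dom (restrict U s) = U.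
  by rewrite dom_restrict (finset.setIidPl Us).
have s0 : dom s != finset.set0.
  by apply: contraNneq U0 => s0; rewrite -finset.subset0 -s0.
rewrite EbarE // EbarE domU // => y /= ys x xU.
rewrite restrict_restrict; last by rewrite finset.sub1set.
by apply: ys; apply: (fintype.subsetP Us).
Qed.

Lemma Ebar_bigI s : dom s != finset.set0 ->
  Ebar s = \big[setI/setT]_(x | x \in dom s) Ebar (restrict [set x] s).
Proof.
move=> s0; rewrite EbarE //; apply/seteqP; split=> y ys.
  by apply/bigsetIP => x /andP[_ /ys].
by move=> x xs; apply: (proj1 (bigsetIP _ _ _ _) ys); rewrite mem_index_enum.
Qed.

Lemma SigmaU_Ebar U s : U != finset.set0 -> sec_over U s -> SigmaU Ebar U (Ebar s).
Proof.
move=> U0 /eqP sU; rewrite Ebar_bigI sU //.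
apply: gen_algebra_bigI => x xU; apply: ga_base; exists x, (restrict [set x] s).
by split=> //; apply: sec_over_restrict; rewrite finset.sub1set sU.
Qed.

End EventRepresentation.

Section WeakProbabilitySpace.
Variables (X O : finType) (M : {set {set X}}) (R : realType)
  (e : {set X} -> section X O -> R)
  (Y : Type) (Ebar : section X O -> set Y) (mu : set Y -> R).
Hypotheses (HS : empirical_scenario O M) (HE : empirical_model M e)
  (HW : WPS_representation M e Ebar mu).
Implicit Types (s t g : section X O) (U C : {set X}).

Let ER : event_representation Ebar. Proof. by case: HW. Qed.

Lemma context1 x : context M [set x].
Proof.
case: HS => cover _ _; have [C CM xC] := cover x.
by exists C; rewrite ?finset.sub1set.
Qed.

Lemma Sigma_SigmaU U A : context M U -> U != finset.set0 ->
  SigmaU Ebar U A -> Sigma M Ebar A.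
Proof. by exists U. Qed.

Lemma Sigma_Ebar U s : context M U -> U != finset.set0 -> sec_over U s ->
  Sigma M Ebar (Ebar s).
Proof. by move=> cU U0 sU; apply: (Sigma_SigmaU cU U0); apply: SigmaU_Ebar. Qed.

Lemma mu_prob U : context M U -> U != finset.set0 ->
  fa_probability (SigmaU Ebar U) mu.
Proof. by case: HW => _ WC _ _; apply: WC. Qed.

Lemma mu_ge0 A : Sigma M Ebar A -> 0 <= mu A.
Proof. by case=> U [cU U0 SA]; have [m_ge0 _ _] := mu_prob cU U0; apply: m_ge0. Qed.

Lemma Sigma_setT (x : X) : Sigma M Ebar setT.
Proof.
by apply: (Sigma_SigmaU (context1 x) (set1_neq0 x)); apply: gen_algebraT.
Qed.

Lemma mu_setT (x : X) : mu setT = 1.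
Proof. by have [_ -> _] := mu_prob (context1 x) (set1_neq0 x). Qed.

Lemma mu_Ebar C s : C \in M -> C != finset.set0 -> sec_over C s ->
  mu (Ebar s) = e C s.
Proof.
move=> CM C0 sC; case: HW => _ _ EC _.
by rewrite (EC C C) ?marginal_id //; apply: (Sigma_Ebar _ C0 sC); exists C.
Qed.

Lemma mu_EbarI U s s' : context M U -> sec_over U s -> sec_over U s' -> s != s' ->
  mu (Ebar s `&` Ebar s') = 0.
Proof. by case: HW => _ _ _ ME; apply: ME. Qed.

Lemma Sigma_EbarI U s s' : context M U -> U != finset.set0 ->
  sec_over U s -> sec_over U s' -> Sigma M Ebar (Ebar s `&` Ebar s').
Proof.
move=> cU U0 sU s'U; apply: (Sigma_SigmaU cU U0).
by apply: gen_algebraI; apply: (SigmaU_Ebar ER U0).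
Qed.

Lemma e_set0 : finset.set0 \in M -> e finset.set0 [ffun => None] = 1.
Proof. by case: HE => distr _ /distr; apply: distribution_set0. Qed.

Definition undetermined x : set Y :=
  ~` \big[setU/set0]_(s | sec_over [set x] s) Ebar s.

Lemma SigmaU_undetermined x : SigmaU Ebar [set x] (undetermined x).
Proof.
apply/ga_compl/gen_algebra_bigU => s sx.
exact: (SigmaU_Ebar ER (set1_neq0 x) sx).
Qed.

Lemma Sigma_undetermined x : Sigma M Ebar (undetermined x).
Proof.
exact: (Sigma_SigmaU (context1 x) (set1_neq0 x) (SigmaU_undetermined x)).
Qed.

Lemma mu_undetermined x : mu (undetermined x) = 0.
Proof.
have [m_ge0 mT mU] := mu_prob (context1 x) (set1_neq0 x).
have SEbar s : sec_over [set x] s -> SigmaU Ebar [set x] (Ebar s).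
  exact: (SigmaU_Ebar ER (set1_neq0 x)).
rewrite /undetermined (measureC mU) ?mT; last exact: gen_algebra_bigU.
rewrite (measure_bigU_null m_ge0 mU) ?index_enum_uniq //; last first.
  by move=> s s' sx s'x; apply: mu_EbarI (context1 x) sx s'x.
case: HS => cover _ _; have [C CM xC] := cover x; case: HW => _ _ EC _.
have mu_marginal s : sec_over [set x] s -> mu (Ebar s) = marginal (e C) C [set x] s.
  move=> sx; apply: EC; rewrite ?finset.sub1set //.
  exact: (Sigma_Ebar (context1 x) (set1_neq0 x) sx).
rewrite (eq_bigr _ mu_marginal) sum_marginal ?finset.sub1set //.
by case: HE => /(_ C CM) [_ ->] _; rewrite subrr.
Qed.

Lemma global_section_through y C t : sec_over C t ->
  (forall x, x \in C -> Ebar (restrict [set x] t) y) ->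
  (forall x, ~ undetermined x y) ->
  exists g, [/\ global_section g, restrict C g = t &
                forall x, Ebar (restrict [set x] g) y].
Proof.
move=> /[dup] tC /eqP domt ty y_det.
have pick x : exists s, [/\ sec_over [set x] s, Ebar s y &
                           x \in C -> s = restrict [set x] t].
  case xC: (x \in C).
    exists (restrict [set x] t); split=> //; last exact: ty.
    by apply: sec_over_restrict; rewrite finset.sub1set domt.
  have /bigsetUP [s /andP[_ sx] sy] := contrapT (y_det x).
  by exists s.
have [f /all_and3 [fx fy fC]] := choice pick.
have [g [gX gf]] := glue_sections fx.
exists g; split=> // [|x]; last by rewrite gf.
by apply: restrict1_eq => // x xC; rewrite gf fC.
Qed.

Definition support_gap (p : {set X} * section X O) : bool :=
  [&& p.1 \in M, p.1 != finset.set0, sec_over p.1 p.2 & e p.1 p.2 == 0].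

Definition null_events : seq (set Y) :=
  [seq undetermined x | x <- enum X] ++ [seq Ebar p.2 | p <- enum support_gap].

Lemma null_eventsP A : A \in null_events -> Sigma M Ebar A /\ mu A = 0.
Proof.
rewrite mem_cat => /orP[/mapP [x _ ->]|/mapP [[C s]]].
  by split; [apply: Sigma_undetermined | apply: mu_undetermined].
rewrite mem_enum => /and4P [/= CM C0 sC /eqP e0] ->.
by split; [apply: (Sigma_Ebar _ C0 sC); exists C | rewrite (mu_Ebar CM C0 sC)].
Qed.

Lemma inconsistent_support_gap g : global_section g ->
  ~ consistent_with_support M e g -> exists C, support_gap (C, restrict C g).
Proof.
move=> gX /existsNP [C /not_implyP [CM /negP e_le0]]; exists C.
have C0 : C != finset.set0.
  apply: contraNneq e_le0 => C0; move: CM.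
  by rewrite C0 restrict0 => /e_set0 ->; apply: ltr01.
case: HE => /(_ C CM) [e_ge0 _] _; have gC := sec_over_restrict_global C gX.
by rewrite /support_gap /= CM C0 gC eq_le (e_ge0 _ gC) leNgt e_le0.
Qed.

Lemma null_events_cover y C t : sec_over C t ->
  (forall x, x \in C -> Ebar (restrict [set x] t) y) ->
  (forall g, global_section g -> restrict C g = t -> ~ consistent_with_support M e g) ->
  exists2 A, A \in null_events & A y.
Proof.
move=> tC ty t_inconsistent.
have [[x x_undet]|/forallNP y_det] := pselect (exists x, undetermined x y).
  by exists (undetermined x) => //; rewrite mem_cat map_f ?mem_enum.
have [g [gX gt gy]] := global_section_through tC ty y_det.
have [D gap] := inconsistent_support_gap gX (t_inconsistent g gX gt).
exists (Ebar (restrict D g)).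
  rewrite mem_cat; apply/orP; right.
  by apply/mapP; exists (D, restrict D g); rewrite ?mem_enum.
have /and4P [_ D0 _ _] := gap.
have domD : dom (restrict D g) = D by apply/eqP; apply: sec_over_restrict_global.
rewrite (EbarE ER) domD // => x xD.
by rewrite restrict_restrict ?finset.sub1set.
Qed.

Lemma defect_of_cover (x0 : X) (L : seq (set Y)) :
  {in L, forall A, Sigma M Ebar A} -> (forall y, exists2 A, A \in L & A y) ->
  exists n (V : 'I_n -> set Y),
    [/\ fin_family V, (forall i, Sigma M Ebar (V i)), Sigma M Ebar (family_union V)
      & 1 - \sum_(A <- L) mu A <= defect mu V <= 1].
Proof.
move=> SL L_cover; exists (size (undup L)), (family_of_seq L).
have UT : family_union (family_of_seq L) = setT.
  by rewrite family_union_of_seq; apply/seteqP; split=> y // _; apply: L_cover.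
have mu_ge0L : {in L, forall A, 0 <= mu A} by move=> A /SL /mu_ge0.
split; [exact: fin_family_of_seq | by move=> i; apply/SL/family_of_seq_mem |
        by rewrite UT; apply: Sigma_setT x0 |].
rewrite /defect UT (mu_setT x0) sum_family_of_seq lerD2l lerN2 ler_sum_undup //=.
by rewrite gerBl big_seq sumr_ge0 // => A; rewrite mem_undup => /mu_ge0L.
Qed.

Lemma strongly_contextual_defect : strongly_contextual M e ->
  exists n (V : 'I_n -> set Y),
    [/\ fin_family V, (forall i, Sigma M Ebar (V i)),
        Sigma M Ebar (family_union V) & defect mu V = 1].
Proof.
move=> SC; have g_inconsistent g : global_section g -> ~ consistent_with_support M e g.
  by move=> gX g_cons; apply: SC; exists g.
have [o _] : exists o : O, o \in O by case: HS => _ _ /card_gt0P.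
have g0X : global_section ([ffun => Some o] : section X O).
  by apply/eqP/setP=> x; rewrite mem_dom ffunE inE.
have [C /and4P [_ /set0Pn [x0 _] _ _]] :=
  inconsistent_support_gap g0X (g_inconsistent _ g0X).
have null_Sigma : {in null_events, forall A, Sigma M Ebar A}.
  by move=> A /null_eventsP [].
have null_cover y : exists2 A, A \in null_events & A y.
  apply: (null_events_cover (C := finset.set0) (t := [ffun => None])) => [|x|g gX _].
  - by rewrite sec_over0.
  - by rewrite inE.
  - exact: g_inconsistent.
have [n [V [VV SV SU /andP [defect_ge defect_le]]]] :=
  defect_of_cover x0 null_Sigma null_cover.
exists n, V; split=> //; apply/eqP; rewrite eq_le defect_le /=.
by move: defect_ge; rewrite big_seq big1 ?subr0 // => A /null_eventsP [].
Qed.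

Lemma logically_contextual_defect : logically_contextual M e ->
  exists n (V : 'I_n -> set Y),
    [/\ fin_family V, (forall i, Sigma M Ebar (V i)),
        Sigma M Ebar (family_union V) & 0 < defect mu V].
Proof.
case=> C [t [CM tC et t_inconsistent]].
have [C0|C0] := eqVneq C finset.set0.
  have SC : strongly_contextual M e.
    case=> g [gX g_cons]; apply: t_inconsistent; exists g; split=> //.
    by move: tC; rewrite C0 restrict0 sec_over0 => /eqP ->.
  have [n [V [VV SV SU defect1]]] := strongly_contextual_defect SC.
  by exists n, V; rewrite defect1 ltr01.
have [x0 _] := set0Pn _ C0.
have cC : context M C by exists C.
have [m_ge0 mT mU] := mu_prob cC C0.
have SEt := SigmaU_Ebar ER C0 tC.
pose L := ~` Ebar t :: null_events.
have SL : {in L, forall A, Sigma M Ebar A}.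
  move=> A; rewrite inE => /orP [/eqP -> | /null_eventsP []//].
  exact: (Sigma_SigmaU cC C0 (ga_compl SEt)).
have L_cover y : exists2 A, A \in L & A y.
  have [ty | nty] := pselect (Ebar t y); last by exists (~` Ebar t); rewrite ?mem_head.
  have [A An Ay] : exists2 A, A \in null_events & A y.
    apply: (null_events_cover tC) => [x xC|g gX gt g_cons].
      apply: (Ebar_restrict_sub ER (set1_neq0 x)) ty.
      by rewrite finset.sub1set (eqP tC).
    by apply: t_inconsistent; exists g.
  by exists A; rewrite // inE An orbT.
have [n [V [VV SV SU /andP [defect_ge _]]]] := defect_of_cover x0 SL L_cover.
exists n, V; split=> //; apply: lt_le_trans defect_ge.
rewrite big_cons big_seq big1 => [|A /null_eventsP [] //].
by rewrite addr0 (measureC mU SEt) mT (mu_Ebar CM C0 tC) opprB addrC subrK.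
Qed.

Section GlobalDistribution.
Variable nu : set Y -> R.
Local Notation G := (gen_algebra (Sigma M Ebar)).
Hypotheses (nu_ge0 : forall A, G A -> 0 <= nu A)
  (nuU : forall A B, G A -> G B -> A `&` B = set0 -> nu (A `|` B) = nu A + nu B)
  (nu_mu : forall A, Sigma M Ebar A -> nu A = mu A).
(* Only for nonempty X does the event representation determine E(g) as the
   intersection of the E(g|_x). *)
Variable x0 : X.

Let domg g : global_section g -> dom g != finset.set0.
Proof. by move=> /eqP ->; apply/set0Pn; exists x0; rewrite inE. Qed.

Let nu_sub_null A B : G A -> Sigma M Ebar B -> A `<=` B -> mu B = 0 -> nu A = 0.
Proof.
move=> GA SB AB muB0.
by apply: (measure_sub0 nu_ge0 nuU GA (ga_base SB) AB); rewrite nu_mu.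
Qed.

Lemma gen_algebra_Ebar_global g : global_section g -> G (Ebar g).
Proof.
move=> gX; rewrite (Ebar_bigI ER) ?domg //.
apply: gen_algebra_bigI => x _; apply: ga_base.
exact: (Sigma_Ebar (context1 x) (set1_neq0 x) (sec_over_restrict_global _ gX)).
Qed.

Lemma nu_Ebar_globalI g g' : global_section g -> global_section g' -> g != g' ->
  nu (Ebar g `&` Ebar g') = 0.
Proof.
move=> gX g'X /restrict1_neq [x neq_gg'].
have gx := sec_over_restrict_global [set x] gX.
have g'x := sec_over_restrict_global [set x] g'X.
apply: (nu_sub_null (B := Ebar (restrict [set x] g) `&` Ebar (restrict [set x] g'))).
- by apply: gen_algebraI; apply: gen_algebra_Ebar_global.
- exact: Sigma_EbarI (context1 x) (set1_neq0 x) gx g'x.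
- by apply: setISS; apply/(Ebar_restrict_sub ER (set1_neq0 x))/sub_dom_global.
- exact: mu_EbarI (context1 x) gx g'x neq_gg'.
Qed.

Lemma nu_uncovered : nu (~` \big[setU/set0]_(g | global_section g) Ebar g) = 0.
Proof.
have G_undet : G (\big[setU/set0]_x undetermined x).
  by apply: gen_algebra_bigU => x _; apply/ga_base/Sigma_undetermined.
apply: (measure_sub0 nu_ge0 nuU (B := \big[setU/set0]_x undetermined x)) => //.
- by apply/ga_compl/gen_algebra_bigU => g; apply: gen_algebra_Ebar_global.
- move=> y /= y_out; apply/bigsetUP.
  have [[x x_undet]|/forallNP y_det] := pselect (exists x, undetermined x y).
    by exists x; rewrite ?mem_index_enum.
  have empty0 : sec_over finset.set0 ([ffun => None] : section X O).
    by rewrite sec_over0.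
  have no_x x : x \in finset.set0 -> Ebar (restrict [set x] [ffun => None]) y.
    by rewrite inE.
  have [g [gX _ gy]] := global_section_through empty0 no_x y_det.
  exfalso; apply: y_out; apply/bigsetUP; exists g; first by rewrite mem_index_enum.
  by rewrite (EbarE ER) ?domg // => x _; apply: gy.
- apply/eqP; rewrite eq_le nu_ge0 // andbT.
  apply: le_trans (measure_bigU_le nu_ge0 nuU _ _) _.
    by move=> x _; apply/ga_base/Sigma_undetermined.
  rewrite big1 // => x _; rewrite nu_mu ?mu_undetermined //.
  exact: Sigma_undetermined.
Qed.

Lemma nu_partition B : G B ->
  nu B = \sum_(g | global_section g) nu (B `&` Ebar g).
Proof.
exact: (measure_partition nu_ge0 nuU (index_enum_uniq _) gen_algebra_Ebar_global
  nu_Ebar_globalI nu_uncovered).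
Qed.

Lemma nu_Ebar_global_sum : \sum_(g | global_section g) nu (Ebar g) = 1.
Proof.
have := nu_partition (gen_algebraT (Sigma M Ebar)).
rewrite nu_mu ?(mu_setT x0); last exact: Sigma_setT x0.
by under eq_bigr do rewrite setTI.
Qed.

Lemma marginal_nu_Ebar C t : C \in M -> sec_over C t ->
  marginal (fun g => nu (Ebar g)) [set: X] C t = e C t.
Proof.
move=> CM tC; rewrite /marginal.
have [C0|C0] := eqVneq C finset.set0.
  move: tC CM; rewrite C0 sec_over0 => /eqP -> /e_set0 ->.
  by rewrite -nu_Ebar_global_sum; apply: eq_bigl => g; rewrite restrict0 eqxx andbT.
have cC : context M C by exists C.
have St := Sigma_Ebar cC C0 tC.
rewrite -(mu_Ebar CM C0 tC) -nu_mu // (nu_partition (ga_base St)) big_mkcondr.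
apply: eq_bigr => g gX; have gC := sec_over_restrict_global C gX.
case: eqP => [<-|/eqP neq_gt].
  by rewrite setIidr //; apply/(Ebar_restrict_sub ER C0)/sub_dom_global.
symmetry; apply: (nu_sub_null (B := Ebar t `&` Ebar (restrict C g))).
- exact/gen_algebraI/gen_algebra_Ebar_global/gX/ga_base.
- exact: Sigma_EbarI cC C0 tC gC.
- by apply: setIS; apply: (Ebar_restrict_sub ER C0); apply: sub_dom_global.
- by apply: mu_EbarI cC tC gC _; rewrite eq_sym.
Qed.

Lemma global_distribution_of_measure : ~ probabilistically_contextual M e.
Proof.
apply; exists (fun g => nu (Ebar g)); split.
  by split; [move=> g /gen_algebra_Ebar_global /nu_ge0 | exact: nu_Ebar_global_sum].
by move=> C CM t; apply: marginal_nu_Ebar.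
Qed.

End GlobalDistribution.

Lemma void_not_probabilistically_contextual :
  (X -> False) -> ~ probabilistically_contextual M e.
Proof.
move=> X0; apply; exists (fun=> 1).
have all_empty (r : section X O) : r = [ffun => None].
  by apply/ffunP => x; case: (X0 x).
have all_set0 (U : {set X}) : U = finset.set0 by apply/setP => x; case: (X0 x).
have all_over U (r : section X O) : sec_over U r.
  by rewrite (all_set0 U) sec_over0 (all_empty r).
have sum1 (P : pred (section X O)) : P [ffun => None] -> \sum_(r | P r) 1 = 1 :> R.
  move=> P0; rewrite (big_pred1 [ffun => None]) // => r.
  by apply/idP/eqP => [_|->]; [apply: all_empty | apply: P0].
split; first by split=> //; apply: sum1.
move=> C CM t _; rewrite /marginal (all_empty t).
move: CM; rewrite (all_set0 C) => /e_set0 ->.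
by apply: sum1; rewrite all_over restrict0 eqxx.
Qed.

Lemma probabilistically_contextual_nonadditive : probabilistically_contextual M e ->
  forall (Sig' : set (set Y)) (mu' : set Y -> R),
    monotonic_extension (Sigma M Ebar) mu Sig' mu' ->
    exists n (V : 'I_n -> set Y),
      [/\ fin_family V, (forall i, Sig' (V i)),
          (forall i j, i != j -> V i `&` V j = set0),
          Sig' (family_union V)
        & mu' (family_union V) != \sum_(i < n) mu' (V i)].
Proof.
move=> PC Sig' mu' [GS' mu'_mu mu'_01 _]; apply: contrapT => no_violation.
have mu'_families n (V : 'I_n -> set Y) : fin_family V -> (forall i, Sig' (V i)) ->
    (forall i j, i != j -> V i `&` V j = set0) -> Sig' (family_union V) ->
    mu' (family_union V) = \sum_(i < n) mu' (V i).
  move=> VV SV disjV SU; apply/eqP/negPn/negP => neq.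
  by apply: no_violation; exists n, V.
have mu'_ge0 A : gen_algebra (Sigma M Ebar) A -> 0 <= mu' A.
  by move=> /GS' /mu'_01 /andP [].
have mu'U A B : gen_algebra (Sigma M Ebar) A -> gen_algebra (Sigma M Ebar) B ->
    A `&` B = set0 -> mu' (A `|` B) = mu' A + mu' B.
  move=> GA GB; apply: (families_additive_setU mu'_families); apply: GS' => //.
    exact: ga_empty.
  exact: ga_union.
have [[x0 _]|X0] := pselect (exists x : X, True).
  exact: (global_distribution_of_measure mu'_ge0 mu'U mu'_mu x0 PC).
by apply: (void_not_probabilistically_contextual _ PC) => x; apply: X0; exists x.
Qed.

End WeakProbabilitySpace.

Theorem theorem1 (X O : finType) (M : {set {set X}}) (R : realType)
  (e : {set X} -> {ffun X -> option O} -> R)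
  (Y : Type) (Ebar : {ffun X -> option O} -> set Y) (mu : set Y -> R) :
  empirical_scenario O M ->
  empirical_model M e ->
  WPS_representation M e Ebar mu ->
  [/\ (strongly_contextual M e ->
         exists n (V : 'I_n -> set Y),
           [/\ fin_family V, (forall i, Sigma M Ebar (V i)),
               Sigma M Ebar (family_union V) & defect mu V = 1]),
      (logically_contextual M e ->
         exists n (V : 'I_n -> set Y),
           [/\ fin_family V, (forall i, Sigma M Ebar (V i)),
               Sigma M Ebar (family_union V) & 0 < defect mu V])
    & (probabilistically_contextual M e ->
         forall (Sig' : set (set Y)) (mu' : set Y -> R),
           monotonic_extension (Sigma M Ebar) mu Sig' mu' ->
           exists n (V : 'I_n -> set Y),
             [/\ fin_family V, (forall i, Sig' (V i)),
                 (forall i j, i != j -> V i `&` V j = set0),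
                 Sig' (family_union V)
               & mu' (family_union V) != \sum_(i < n) mu' (V i)])].
Proof.
move=> HS HE HW; split.
- exact: strongly_contextual_defect HS HE HW.
- exact: logically_contextual_defect HS HE HW.
- exact: probabilistically_contextual_nonadditive HS HE HW.
Qed.
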